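(* Let $L=dN$ with integers $d\ge2$, $N\ge1$, and let $0<|z|<r_0$. Then the set $\mathcal L_z$ can be partitioned into $N$ subsets $\mathcal L_z^{(i)}$, $1\le i\le N$, each of $d-1$ elements, such that there is a map $M:\mathcal L_z\to\mathcal R_z$ with $M(u)=M(u')$ whenever $u,u'$ lie in the same subset $\mathcal L_z^{(i)}$, and $v=M(u)$ satisfies $v(v+1)^{d-1}=u(u+1)^{d-1}$.
   Context: $\rho=N/L=1/d$, $r_0=\rho^\rho(1-\rho)^{1-\rho}$. For $0<|z|<r_0$, the roots of $w^N(w+1)^{L-N}=z^L$ are simple and none has real part $-\rho$; $\mathcal L_z$ is the set of roots with real part $<-\rho$ and $\mathcal R_z$ the set with real part $>-\rho$. *)

From mathcomp Require Import all_boot all_order all_algebra.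
From mathcomp Require Import all_classical all_reals all_analysis.
From mathcomp Require Import complex.
Set Implicit Arguments. Unset Strict Implicit. Unset Printing Implicit Defensive.
Import Order.TTheory GRing.Theory Num.Theory.
Local Open Scope ring_scope.

Section Defs.
Variable R : realType.

Definition rho (N L : nat) : R := N%:R / L%:R.

Definition r0 (N L : nat) : R :=
  (rho N L) `^ (rho N L) * (1 - rho N L) `^ (1 - rho N L).

Definition is_root_eq (N L : nat) (z w : R[i]) : Prop :=
  w ^+ N * (w + 1) ^+ (L - N) = z ^+ L.

Definition Lz (N L : nat) (z w : R[i]) : Prop :=
  is_root_eq N L z w /\ (@complex.Re R w) < - rho N L.

Definition Rz (N L : nat) (z w : R[i]) : Prop :=
  is_root_eq N L z w /\ - rho N L < @complex.Re R w.
End Defs.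


(* Let f(w) = w (w+1)^(d-1) and rho = 1/d.  The root equation reads f(w)^N = z^(dN),
   so the roots are the solutions of f(w) = c for the N distinct N-th roots c of
   z^(dN), each of modulus |z|^d < r0^d = rho (1-rho)^(d-1).  On the line
   Re w = -rho we have |w| >= rho and |w+1| >= 1-rho, hence |f(w)| >= r0^d: no root
   lies on the line, and since the only critical points of f are -1 (where f = 0)
   and -rho, the d solutions of f(w) = c are simple.  Right of the line, f(w) = c has at most one
   solution, because w |-> c (w+1)^(1-d) is a contraction there, and at least one:
   -rho is a critical point, so the logarithmic derivative of f - c vanishes at -rho,
   whereas every term 1/(-rho - r) would have positive real part if all roots r lay
   left of the line.  Thus each c yields one class of d-1 points of L_z, all sent by
   M to the single point of R_z over c. *)

From mathcomp Require Import all_boot all_order all_algebra.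
From mathcomp Require Import all_classical all_reals all_analysis.
From mathcomp Require Import complex separable.
From mathcomp Require Import ring.
Set Implicit Arguments. Unset Strict Implicit. Unset Printing Implicit Defensive.
Import Order.TTheory GRing.Theory Num.Theory.
Local Open Scope ring_scope.
Local Open Scope complex_scope.

Section RootsSeq.
Variable F : closedFieldType.
Implicit Types (p : {poly F}) (x : F).

Definition roots_seq p : seq F := sval (closed_field_poly_normal p).

Lemma roots_seqE p : p \is monic -> p = \prod_(r <- roots_seq p) ('X - r%:P).
Proof.
move=> /monicP p1; rewrite /roots_seq; case: closed_field_poly_normal => rs /=.
by rewrite p1 scale1r.
Qed.

Lemma size_roots_seq p : p \is monic -> size (roots_seq p) = (size p).-1.
Proof. by move=> /roots_seqE {2}->; rewrite size_prod_XsubC. Qed.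

Lemma mem_roots_seq p x : p \is monic -> (x \in roots_seq p) = root p x.
Proof. by move=> /roots_seqE {2}->; rewrite root_prod_XsubC. Qed.

Lemma uniq_roots_seq p : p \is monic ->
  (forall x, root p x -> p^`().[x] != 0) -> uniq (roots_seq p).
Proof.
move=> pm simple_roots; rewrite -separable_prod_XsubC -roots_seqE // unlock.
exact/Pdiv.ClosedField.coprimepP.
Qed.

End RootsSeq.

Section NthRoots.
Variables (F : numClosedFieldType) (m : nat) (a : F).

Lemma mem_roots_XnsubC x : (x \in roots_seq ('X^(m.+1) - a%:P)) = (x ^+ m.+1 == a).
Proof. by rewrite mem_roots_seq ?monicXnsubC // rootE !hornerE subr_eq0. Qed.

Lemma size_roots_XnsubC : size (roots_seq ('X^(m.+1) - a%:P)) = m.+1.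
Proof. by rewrite size_roots_seq ?monicXnsubC // size_XnsubC. Qed.

Lemma uniq_roots_XnsubC : a != 0 -> uniq (roots_seq ('X^(m.+1) - a%:P)).
Proof.
move=> a0; apply: uniq_roots_seq; first exact: monicXnsubC.
move=> x; rewrite rootE !hornerE subr_eq0 => /eqP xa.
rewrite derivB derivC subr0 derivXn hornerMn hornerXn mulrn_eq0 negb_or expf_eq0 /=.
by apply/negP => /andP[_ /eqP x0]; move: a0; rewrite -xa x0 expr0n eqxx.
Qed.

End NthRoots.

Lemma horner_deriv_prod_XsubC (F : fieldType) (s : seq F) (a : F) : a \notin s ->
  (\prod_(r <- s) ('X - r%:P))^`().[a] =
  (\prod_(r <- s) ('X - r%:P)).[a] * \sum_(r <- s) (a - r)^-1.
Proof.
elim: s => [|x s IH]; first by rewrite !big_nil derivC !hornerC mulr0.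
rewrite inE negb_or => /andP[ax /IH {}IH].
have ax0 : a - x != 0 by rewrite subr_eq0.
rewrite !big_cons derivM derivXsubC mul1r !hornerE IH mulrDr mulrA.
by congr (_ + _); rewrite mulrC mulKf.
Qed.

Lemma sumr_seq_gt0 (C : numDomainType) (T : eqType) (s : seq T) (f : T -> C) :
  s != [::] -> {in s, forall x, 0 < f x} -> 0 < \sum_(x <- s) f x.
Proof.
case: s => [//|x s] _ pos; rewrite big_cons.
apply: (lt_le_trans (pos x (mem_head x s))); rewrite lerDl big_seq sumr_ge0 // => y ys.
by apply/ltW/pos; rewrite inE ys orbT.
Qed.

Lemma ler_norm_subrXX (C : numDomainType) (x y B : C) (m : nat) :
  `|x| <= B -> `|y| <= B ->
  `|x ^+ m.+1 - y ^+ m.+1| <= `|x - y| * (B ^+ m *+ m.+1).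
Proof.
move=> xB yB; have B0 : 0 <= B := le_trans (normr_ge0 x) xB.
rewrite subrXX normrM ler_wpM2l // -[X in _ *+ X]card_ord -sumr_const.
apply: le_trans (ler_norm_sum _ _ _) (ler_sum _ _) => i _.
rewrite normrM !normrX -[m in B ^+ m](subnK (leq_ord i)) exprD.
by apply: ler_pM; rewrite ?exprn_ge0 // lerXn2r // nnegrE.
Qed.

Lemma inord_index_eq (T : eqType) (m : nat) (s : seq T) (x x0 : T) (i : 'I_m.+1) :
  size s = m.+1 -> uniq s -> x \in s -> (inord (index x s) == i) = (x == nth x0 s i).
Proof.
move=> sz su xs; have ixs : (index x s < m.+1)%N by rewrite -sz index_mem.
apply/eqP/eqP => [<-|->]; first by rewrite inordK // nth_index.
by rewrite index_uniq ?sz // inord_val.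
Qed.

Section ComplexRe.
Variable R : rcfType.
Implicit Types x : R[i].

Lemma Re_le_normc x : (complex.Re x)%:C <= `|x|.
Proof. by apply: le_trans (normc_ge_Re x); rewrite lecR ler_norm. Qed.

Lemma ReN_le_normc x : (- complex.Re x)%:C <= `|x|.
Proof. by apply: le_trans (normc_ge_Re x); rewrite lecR -normrN ler_norm. Qed.

Lemma Re_invc_gt0 x : 0 < complex.Re x -> 0 < complex.Re x^-1.
Proof.
case: x => a b /= a0; apply: divr_gt0 => //.
by rewrite ltr_wpDr ?sqr_ge0 ?exprn_gt0.
Qed.

End ComplexRe.

(* Here d = n.+2, so that rhod is rho = 1/d and Kd = r0 ^ d (lemma r0_expn). *)
Section Fibers.
Variables (R : realType) (n : nat).
Local Notation F := R[i].
Implicit Types (c w : F).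

Definition rhod : R := (n.+2)%:R^-1.
Definition Kd : R := rhod * (1 - rhod) ^+ n.+1.
Definition fd w : F := w * (w + 1) ^+ n.+1.
Definition on_left : pred F := fun w => complex.Re w < - rhod.
Definition on_right : pred F := fun w => - rhod < complex.Re w.

Lemma rhod_gt0 : 0 < rhod.
Proof. by rewrite invr_gt0 ltr0n. Qed.

Lemma rhod_lt1 : rhod < 1.
Proof. by rewrite invf_lt1 ?ltr1n ?ltr0n. Qed.

Lemma Kd_expV : Kd * ((1 - rhod)^-1 ^+ n.+2 *+ n.+1) = 1.
Proof.
rewrite /Kd.
have n2 : (n.+2)%:R != 0 :> R by rewrite pnatr_eq0.
have -> : 1 - rhod = (n.+1)%:R / (n.+2)%:R by rewrite /rhod -natr1; field.
rewrite exprVn [_ ^+ n.+2]exprS /rhod -mulr_natr; field.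
by rewrite nat1r -natrD !pnatr_eq0 addn_eq0 expf_neq0.
Qed.

Lemma fd_norm_ge w : complex.Re w = - rhod -> Kd%:C <= `|fd w|.
Proof.
move=> Rew; have rhod1 : 0 <= (1 - rhod)%:C by rewrite ler0c subr_ge0 ltW ?rhod_lt1.
rewrite /fd normrM normrX rmorphM rmorphXn /=.
apply: ler_pM.
- by rewrite ler0c ltW ?rhod_gt0.
- exact: exprn_ge0.
- by apply: (le_trans _ (ReN_le_normc w)); rewrite Rew opprK.
apply: lerXn2r; rewrite ?nnegrE //.
by apply: (le_trans _ (Re_le_normc (w + 1))); rewrite lecR raddfD /= Rew addrC.
Qed.

Lemma norm_addr1_gt w : on_right w -> (1 - rhod)%:C < `|w + 1|.
Proof.
move=> rw; apply: (lt_le_trans _ (Re_le_normc (w + 1))).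
by rewrite ltcR raddfD /= [_ + 1]addrC ltrD2l.
Qed.

Lemma addr1_neq0 w : on_right w -> w + 1 != 0.
Proof.
move=> /norm_addr1_gt; rewrite -normr_gt0; apply: le_lt_trans.
by rewrite ler0c subr_ge0 ltW ?rhod_lt1.
Qed.

Lemma normV_addr1_lt w : on_right w -> `|(w + 1)^-1| < ((1 - rhod)^-1)%:C.
Proof.
move=> rw; have rhod1 : 0 < (1 - rhod)%:C by rewrite ltcR subr_gt0 rhod_lt1.
rewrite normrV ?unitfE ?addr1_neq0 // fmorphV ltf_pV2 ?posrE ?norm_addr1_gt //.
by rewrite normr_gt0 addr1_neq0.
Qed.

Lemma fd_inj_right a b : on_right a -> on_right b ->
  `|fd a| < Kd%:C -> fd a = fd b -> a = b.
Proof.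
move=> ra rb aK eab; set c := fd a in aK eab.
set B : F := ((1 - rhod)^-1)%:C.
have B0 : 0 < B by rewrite ltcR invr_gt0 subr_gt0 rhod_lt1.
have [a1 b1] := (addr1_neq0 ra, addr1_neq0 rb).
set p := (a + 1)^-1; set q := (b + 1)^-1.
have [pB qB] : `|p| <= B /\ `|q| <= B by split; apply/ltW/normV_addr1_lt.
have ea : a = c * p ^+ n.+1 by rewrite /c /fd exprVn mulrK // unitfE expf_neq0.
have eb : b = c * q ^+ n.+1 by rewrite eab /fd exprVn mulrK // unitfE expf_neq0.
have epq : p - q = (b - a) * (p * q) by rewrite /p /q; field; rewrite a1 b1.
have contract : `|a - b| <= `|c| * (B ^+ n.+2 *+ n.+1) * `|a - b|.
  rewrite {1}ea {1}eb -mulrBr normrM -mulrA; apply: ler_wpM2l => //.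
  apply: le_trans (ler_norm_subrXX _ pB qB) _.
  have -> : B ^+ n.+2 *+ n.+1 * `|a - b| = `|a - b| * (B * B) * (B ^+ n *+ n.+1).
    by rewrite !exprS; ring.
  rewrite epq normrM distrC normrM.
  apply: ler_wpM2r; first by rewrite mulrn_wge0 ?exprn_ge0 ?ltW.
  by apply: ler_wpM2l => //; apply: ler_pM.
have lt1 : `|c| * (B ^+ n.+2 *+ n.+1) < 1.
  rewrite -(rmorph1 (real_complex R)) -Kd_expV rmorphM rmorphMn rmorphXn /=.
  by rewrite ltr_pM2r // pmulrn_lgt0 // exprn_gt0.
have [//|] := eqVneq a b; rewrite -subr_eq0 -normr_gt0 => ab0.
by move: contract; rewrite ler_pMl // => /(lt_le_trans lt1); rewrite ltxx.
Qed.

Definition fd_poly c : {poly F} := 'X * ('X - (-1)%:P) ^+ n.+1 - c%:P.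

Let fd_poly_head_monic : ('X * ('X - (-1)%:P) ^+ n.+1 : {poly F}) \is monic.
Proof. by rewrite monicMl ?monicX // monic_exp // monicXsubC. Qed.

Let size_fd_poly_head : size ('X * ('X - (-1)%:P) ^+ n.+1 : {poly F}) = n.+3.
Proof.
by rewrite size_monicM ?monicX ?expf_neq0 ?polyXsubC_eq0 // size_polyX size_exp_XsubC.
Qed.

Lemma size_fd_poly c : size (fd_poly c) = n.+3.
Proof.
rewrite size_polyDl size_fd_poly_head // size_polyN.
exact: leq_ltn_trans (size_polyC_leq1 _) _.
Qed.

Lemma fd_poly_monic c : fd_poly c \is monic.
Proof.
apply/monicP; rewrite lead_coefDl ?(monicP fd_poly_head_monic) //.
by rewrite size_polyN size_fd_poly_head (leq_ltn_trans (size_polyC_leq1 _)).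
Qed.

Lemma horner_fd_poly c w : (fd_poly c).[w] = fd w - c.
Proof. by rewrite !hornerE opprK. Qed.

Lemma horner_deriv_fd_poly c w :
  (fd_poly c)^`().[w] = (w + 1) ^+ n * ((n.+2)%:R * w + 1).
Proof.
rewrite derivB derivC subr0 derivM derivX deriv_exp derivXsubC mul1r.
rewrite !hornerE hornerMn !hornerE opprK /=.
by rewrite exprS -mulr_natr -[n.+2]addn1 natrD; ring.
Qed.

Lemma crit_point_fd w : ((n.+2)%:R * w + 1 == 0) = (w == (- rhod)%:C).
Proof.
have n2 : (n.+2)%:R != 0 :> F by rewrite pnatr_eq0.
rewrite rmorphN fmorphV rmorph_nat /= addr_eq0.
by rewrite (can2_eq (mulKf n2) (mulVKf n2)) mulrN1.
Qed.

Definition fiber c : seq F := roots_seq (fd_poly c).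

Lemma fiberE c : fd_poly c = \prod_(r <- fiber c) ('X - r%:P).
Proof. exact/roots_seqE/fd_poly_monic. Qed.

Lemma mem_fiber c w : (w \in fiber c) = (fd w == c).
Proof. by rewrite mem_roots_seq ?fd_poly_monic // rootE horner_fd_poly subr_eq0. Qed.

Lemma size_fiber c : size (fiber c) = n.+2.
Proof. by rewrite size_roots_seq ?fd_poly_monic // size_fd_poly. Qed.

Lemma fd_off_line c w : `|c| < Kd%:C -> fd w = c -> complex.Re w != - rhod.
Proof.
move=> cK wc; apply/eqP => /fd_norm_ge.
by rewrite wc => /(lt_le_trans cK); rewrite ltxx.
Qed.

Lemma uniq_fiber c : c != 0 -> `|c| < Kd%:C -> uniq (fiber c).
Proof.
move=> c0 cK; apply: uniq_roots_seq (fd_poly_monic c) _ => w.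
rewrite rootE horner_fd_poly subr_eq0 => /eqP wc.
rewrite horner_deriv_fd_poly mulf_neq0 // ?crit_point_fd.
  apply: expf_neq0; apply: contraNneq c0 => w1.
  by rewrite -wc /fd w1 expr0n mulr0.
by apply: contraNneq (fd_off_line cK wc) => ->.
Qed.

Lemma has_right_fiber c : `|c| < Kd%:C -> has on_right (fiber c).
Proof.
move=> cK; apply: contraT => /hasPn not_right.
have left r : r \in fiber c -> complex.Re r < - rhod.
  move=> rc; move: (not_right r rc); rewrite mem_fiber in rc.
  by rewrite /on_right -leNgt le_eqVlt (negPf (fd_off_line cK (eqP rc))).
pose a : F := (- rhod)%:C.
have a_notin : a \notin fiber c by apply/negP => /left; rewrite ltxx.
have fa : (fd_poly c).[a] != 0.
  by rewrite horner_fd_poly subr_eq0; apply/eqP => /(fd_off_line cK); rewrite eqxx.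
have := horner_deriv_prod_XsubC a_notin.
rewrite -fiberE horner_deriv_fd_poly (eqP _ : (n.+2)%:R * a + 1 = 0); last first.
  by rewrite crit_point_fd.
rewrite mulr0 => /esym/eqP; rewrite mulf_eq0 (negPf fa) /= => /eqP sum0.
have : 0 < complex.Re (\sum_(r <- fiber c) (a - r)^-1).
  rewrite raddf_sum sumr_seq_gt0 -?size_eq0 ?size_fiber // => r /left rc.
  by apply: Re_invc_gt0; rewrite raddfB /= subr_gt0.
by rewrite sum0 raddf0 ltxx.
Qed.

Definition right_root c : F := nth 0 (fiber c) (find on_right (fiber c)).

Lemma right_rootP c : `|c| < Kd%:C -> fd (right_root c) = c /\ on_right (right_root c).
Proof.
move=> /has_right_fiber right; split; last exact: nth_find.
by apply/eqP; rewrite -mem_fiber mem_nth // -has_find.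
Qed.

Lemma count_right_fiber c : c != 0 -> `|c| < Kd%:C -> count on_right (fiber c) = 1%N.
Proof.
move=> c0 cK; apply/eqP; rewrite eqn_leq -has_count has_right_fiber // andbT.
rewrite -size_filter (uniq_leq_size (s2 := [:: right_root c])) //.
  by rewrite filter_uniq ?uniq_fiber.
move=> w; rewrite mem_filter mem_fiber inE => /andP[rw /eqP wc].
have [rc rr] := right_rootP cK.
by apply/eqP; apply: fd_inj_right; rewrite ?wc ?rc.
Qed.

Lemma size_left_fiber c : c != 0 -> `|c| < Kd%:C ->
  size (seq.filter on_left (fiber c)) = n.+1.
Proof.
move=> c0 cK; rewrite size_filter (@eq_in_count _ _ (predC on_right)) => [|w].
  have := count_predC on_right (fiber c).
  by rewrite count_right_fiber // size_fiber => -[].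
rewrite mem_fiber => /eqP /(fd_off_line cK) line.
by rewrite /= /on_right /on_left -leNgt le_eqVlt (negPf line).
Qed.

End Fibers.

Section RootEquation.
Variables (R : realType) (n m : nat) (z : R[i]).
Hypotheses (z0 : z != 0) (zr0 : `|z| < (r0 R m.+1 (n.+2 * m.+1))%:C).
Local Notation L := (n.+2 * m.+1)%N.

Lemma rho_mulnr : rho R m.+1 L = rhod R n.
Proof. by rewrite /rho /rhod natrM invfM mulrCA mulfV ?mulr1 ?pnatr_eq0. Qed.

Lemma r0_expn : r0 R m.+1 L ^+ n.+2 = Kd R n.
Proof.
have expr_powR (x y : R) : 0 <= x -> (x `^ y) ^+ n.+2 = x `^ (y * (n.+2)%:R).
  by move=> x0; rewrite powRrM powR_mulrn ?powR_ge0.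
have [rho0 rho1] := (rhod_gt0 R n, rhod_lt1 R n).
have n2 : (n.+2)%:R != 0 :> R by rewrite pnatr_eq0.
rewrite /r0 rho_mulnr exprMn !expr_powR ?subr_ge0 ?ltW //.
have -> : rhod R n * (n.+2)%:R = 1 by rewrite mulVf.
have -> : (1 - rhod R n) * (n.+2)%:R = (n.+1)%:R.
  by rewrite mulrBl mul1r mulVf // -natr1 addrK.
by rewrite powRr1 ?ltW // powR_mulrn ?subr_ge0 ?ltW.
Qed.

Lemma is_root_eq_fd w : is_root_eq m.+1 L z w = (fd n w ^+ m.+1 = z ^+ L).
Proof. by rewrite /is_root_eq /fd mulSn addKn exprMn exprM. Qed.

Definition levels : seq R[i] := roots_seq ('X^(m.+1) - (z ^+ L)%:P).

Lemma mem_levels c : (c \in levels) = (c ^+ m.+1 == z ^+ L).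
Proof. exact: mem_roots_XnsubC. Qed.

Lemma size_levels : size levels = m.+1.
Proof. exact: size_roots_XnsubC. Qed.

Lemma uniq_levels : uniq levels.
Proof. by apply: uniq_roots_XnsubC; rewrite expf_neq0. Qed.

Lemma level_small c : c \in levels -> c != 0 /\ `|c| < (Kd R n)%:C.
Proof.
rewrite mem_levels exprM => /eqP cz.
have zL0 : (z ^+ n.+2) ^+ m.+1 != 0 by rewrite !expf_neq0.
split; first by apply: contra_neq zL0 => c0; rewrite -cz c0 expr0n.
have -> : `|c| = `|z| ^+ n.+2.
  by apply/eqP; rewrite -normrX -(eqrXn2 (ltn0Sn m)) // -!normrX cz.
have r0_ge0 : 0 <= (r0 R m.+1 L)%:C := ltW (le_lt_trans (normr_ge0 z) zr0).
by rewrite -r0_expn rmorphXn ltrXn2r.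
Qed.

Lemma LzE u : Lz m.+1 L z u <-> fd n u \in levels /\ on_left n u.
Proof.
rewrite /Lz /on_left is_root_eq_fd rho_mulnr mem_levels.
by split=> -[fu ul]; split=> //; apply/eqP.
Qed.

Lemma RzE w : Rz m.+1 L z w <-> fd n w \in levels /\ on_right n w.
Proof.
rewrite /Rz /on_right is_root_eq_fd rho_mulnr mem_levels.
by split=> -[fw wr]; split=> //; apply/eqP.
Qed.

End RootEquation.

Theorem lemma10p1 (R : realType) (d N : nat) (z : R[i]) :
  (2 <= d)%N -> (1 <= N)%N ->
  0 < `|z| -> `|z| < ((r0 R N (d * N))%:C)%C ->
  exists (cls : R[i] -> 'I_N) (M : R[i] -> R[i]),
    (forall i : 'I_N, exists s : seq R[i],
        [/\ uniq s, size s = (d - 1)%N &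
            forall u, (Lz N (d * N) z u /\ cls u = i) <-> u \in s]) /\
    (forall u, Lz N (d * N) z u -> Rz N (d * N) z (M u)) /\
    (forall u u', Lz N (d * N) z u -> Lz N (d * N) z u' ->
        cls u = cls u' -> M u = M u') /\
    (forall u, Lz N (d * N) z u ->
        M u * (M u + 1) ^+ (d - 1) = u * (u + 1) ^+ (d - 1)).
Proof.
case: d => [|[|n]] // _; case: N => [//|m] _ z_gt0 zr0; rewrite subSS subn0.
have z0 : z != 0 by rewrite -normr_gt0.
pose cs := levels n m z.
pose cls u : 'I_m.+1 := inord (index (fd n u) cs).
have cls_eq u i : fd n u \in cs -> (cls u == i) = (fd n u == cs`_i).
  by apply: inord_index_eq; rewrite ?size_levels ?uniq_levels.
have small u : Lz m.+1 (n.+2 * m.+1) z u -> fd n u != 0 /\ `|fd n u| < (Kd R n)%:C.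
  by move=> /(LzE n m z)[/(level_small z0 zr0)].
exists cls, (fun u => right_root n (fd n u)); split; [|split; [|split]].
- move=> i; have ci : cs`_i \in cs by rewrite mem_nth ?size_levels.
  have [c0 cK] := level_small z0 zr0 ci.
  exists (seq.filter (on_left n) (fiber n cs`_i)).
  split; [by rewrite filter_uniq ?uniq_fiber | exact: size_left_fiber |].
  move=> u; rewrite (LzE n m z) mem_filter mem_fiber.
  split=> [[[uc ->] /eqP]|/andP[ul /eqP uc]]; first by rewrite cls_eq // => ->.
  by split; [rewrite uc | apply/eqP; rewrite cls_eq uc].
- move=> u Lu; have [_ /right_rootP[fM rM]] := small u Lu.
  by apply/(RzE n m z); rewrite fM; case/(LzE n m z): Lu.
- move=> u u' /(LzE n m z)[uc _] /(LzE n m z)[uc' _] /eqP.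
  have := cls_eq u' (cls u') uc'; rewrite eqxx => /esym/eqP fu'.
  by rewrite cls_eq // -fu' => /eqP ->.
- by move=> u /small[_ /right_rootP[]].
Qed.
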